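(* Let $V$ be a set of $n$ vertices. Suppose each unordered pair of distinct vertices of $V$ is assigned exactly one of: a red color together with a direction, the color blue, the color green, or a purple color together with a direction; suppose there are $2\alpha\binom n2$ red pairs, $\beta\binom n2$ blue pairs, $\gamma\binom n2$ green pairs and $2\delta\binom n2$ purple pairs. Let $T_g$ be the number of $3$-subsets all of whose pairs are green; $T_p$ the number of $3$-subsets $\{x,y,z\}$ all of whose pairs are purple and directed cyclically ($x\to y\to z\to x$ or reverse); and $T_c$ the number of $3$-subsets $\{x,y,z\}$ (''cherries'') such that, for some labeling, $\{y,z\}$ is blue and $\{x,y\},\{x,z\}$ are red directed $y\to x$ and $z\to x$. Then: (1) $T_g\le\gamma^{3/2}n^3/6$; (2) $T_p\le2\delta^{3/2}n^3/6$; (3) $T_c\le3\alpha\sqrt\beta\, n^3/6$; (4) $T_c\le0.465\,n^3/6$; (5) $T_p+\tfrac14(T_g+T_c)\le\tfrac14\,n^3/6$; (6) $T_c\le\dfrac{3\alpha\beta}{\alpha+\beta}\,n^3/6$, where $\frac{\alpha\beta}{\alpha+\beta}$ is read as $0$ if $\alpha=\beta=0$. *)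

From HB Require Import structures.
From mathcomp Require Import all_boot all_order all_algebra.
Set Implicit Arguments. Unset Strict Implicit. Unset Printing Implicit Defensive.
Import Order.TTheory GRing.Theory Num.Theory.

(* Colour of an ordered pair (x,y) of distinct vertices:
   RedTo   : the pair is red, directed x -> y
   RedFrom : the pair is red, directed y -> x
   Blue, Green : undirected colours
   PurTo / PurFrom : purple, directed x -> y / y -> x *)
Inductive Col := RedTo | RedFrom | Blue | Green | PurTo | PurFrom.

Definition col_code (c : Col) : nat :=
  match c with RedTo => 0 | RedFrom => 1 | Blue => 2 | Green => 3
  | PurTo => 4 | PurFrom => 5 end%N.
Definition code_col (n : nat) : Col :=
  match n with 0 => RedTo | 1 => RedFrom | 2 => Blue | 3 => Green
  | 4 => PurTo | _ => PurFrom end%N.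
Lemma col_codeK : cancel col_code code_col. Proof. by case. Qed.
HB.instance Definition _ := Equality.copy Col (can_type col_codeK).

Definition col_rev (c : Col) : Col :=
  match c with RedTo => RedFrom | RedFrom => RedTo | PurTo => PurFrom
  | PurFrom => PurTo | Blue => Blue | Green => Green end.

(* c is a valid colouring of the unordered pairs: colour of (y,x) is the
   reverse of colour of (x,y) for distinct x y (c x x is irrelevant). *)
Definition valid_colouring (V : finType) (c : V -> V -> Col) : Prop :=
  forall x y : V, x != y -> c y x = col_rev (c x y).

Definition npairs (V : finType) (P : V -> V -> bool) : nat :=
  #|[set E : {set V} | [exists x, exists y, [&& x != y, E == [set x; y] & P x y]]]|.

Definition n_red (V : finType) (c : V -> V -> Col) :=
  npairs (fun x y => c x y == RedTo).
Definition n_blue (V : finType) (c : V -> V -> Col) :=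
  npairs (fun x y => c x y == Blue).
Definition n_green (V : finType) (c : V -> V -> Col) :=
  npairs (fun x y => c x y == Green).
Definition n_purple (V : finType) (c : V -> V -> Col) :=
  npairs (fun x y => c x y == PurTo).

Definition T_g (V : finType) (c : V -> V -> Col) : nat :=
  #|[set S : {set V} | (#|S| == 3) &&
      [forall x in S, forall y in S, (x != y) ==> (c x y == Green)]]|.

(* 3-subsets {x,y,z} all purple and cyclically directed x->y->z->x
   (the reverse cycle is the same condition after relabeling) *)
Definition T_p (V : finType) (c : V -> V -> Col) : nat :=
  #|[set S : {set V} | [exists x, exists y, exists z,
      [&& x != y, y != z, x != z, S == [set x; y; z],
          c x y == PurTo, c y z == PurTo & c z x == PurTo]]]|.

Definition T_c (V : finType) (c : V -> V -> Col) : nat :=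
  #|[set S : {set V} | [exists x, exists y, exists z,
      [&& x != y, y != z, x != z, S == [set x; y; z],
          c y z == Blue, c y x == RedTo & c z x == RedTo]]]|.

From HB Require Import structures.
From mathcomp Require Import all_boot all_order all_algebra.
From mathcomp Require Import zify ring lra.
Set Implicit Arguments. Unset Strict Implicit. Unset Printing Implicit Defensive.
Import Order.TTheory GRing.Theory Num.Theory.

(* All six bounds count labelled triangles vertex by vertex.  For (1)-(3) the
   triangles with apex x number at most d(x)^2 for a suitable degree d(x), and
   at most the number M of ordered pairs of one colour; summing
   min(d^2, M) <= d sqrt M over x and using sum_x d(x) <= M gives M^(3/2).
   For (6), cherries are counted at a base vertex with
   o b <= s (l^2 o + (1 - l)^2 b) for o + b <= s = n - 1, l = beta/(alpha+beta).
   For (4) and (5), an inequality on the six labellings of every triangle bounds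
   the squared out-degrees of the red (resp. purple) oriented graph by directed
   paths and non-adjacent pairs; adding at each vertex a quadratic inequality
   in the degrees, proved by an explicit sum of squares, and summing over the
   vertices yields 400 T_c <= 31 n^3 and 24 T_p + 6 T_g + 6 T_c <= n^3. *)

Lemma leq_nat_of_bool (b b' : bool) : (b -> b') -> (b : nat) <= b'.
Proof. by case: b; case: b' => // /(_ isT). Qed.

Lemma leq_sum2_mul (I : finType) (g h : I -> nat) (F : I -> I -> nat) :
  (forall y z, F y z <= g y * h z) ->
  \sum_y \sum_z F y z <= (\sum_y g y) * (\sum_z h z).
Proof.
by move=> Fgh; rewrite big_distrlr; apply: leq_sum => y _; apply: leq_sum => z _.
Qed.

Lemma sqr_sum_indicator (V : finType) (p : pred V) :
  (\sum_y (p y : nat)) ^ 2 =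
  \sum_y \sum_z ([&& y != z, p y & p z] : nat) + \sum_y (p y : nat).
Proof.
rewrite -mulnn -big_split big_distrlr /=; apply: eq_bigr => y _.
rewrite (bigD1 y) //= [in RHS](bigD1 y) //= eqxx /= addnAC; congr (_ + _).
  by case: (p y).
by apply: eq_bigr => z zy; rewrite eq_sym zy; case: (p y); case: (p z).
Qed.

Lemma set2_eq_cases (V : finType) (a b a' b' : V) :
  a != b -> [set a; b] = [set a'; b'] -> (a' = a /\ b' = b) \/ (a' = b /\ b' = a).
Proof.
move=> ab /setP E.
have : a \in [set a'; b'] by rewrite -E set21.
have : b \in [set a'; b'] by rewrite -E set22.
rewrite !in_set2 => /orP[]/eqP bE /orP[]/eqP aE; subst; rewrite ?eqxx // in ab.
  by right.
by left.
Qed.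

Lemma cards3_triple (V : finType) (S : {set V}) : #|S| = 3 ->
  exists x y z, [/\ x != y, y != z, x != z & S = [set x; y; z]].
Proof.
move=> S3; have /card_gt0P [x xS] : 0 < #|S| by rewrite S3.
have /cards2P [y [z [yz Sx]]] : #|S :\ x| == 2.
  by move: (cardsD1 x S); rewrite S3 xS add1n => -[<-].
have : (y \in S :\ x) && (z \in S :\ x) by rewrite Sx !inE !eqxx orbT.
rewrite !inE => /andP [/andP [yx _] /andP [zx _]].
exists x, y, z; split; rewrite // 1?eq_sym //.
by rewrite -(setD1K xS) Sx setUA.
Qed.

Section TripleSums.
Variable V : finType.
Implicit Types F G : V -> V -> V -> nat.

Definition sum3 F := \sum_x \sum_y \sum_z F x y z.

Definition symmetrize F x y z :=
  F x y z + F x z y + F y x z + F y z x + F z x y + F z y x.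

Lemma sum3D F G : sum3 (fun x y z => F x y z + G x y z) = sum3 F + sum3 G.
Proof.
rewrite /sum3 -big_split; apply: eq_bigr => x _; rewrite -big_split.
by apply: eq_bigr => y _; rewrite -big_split.
Qed.

Lemma sum3_mul k F : sum3 (fun x y z => k * F x y z) = k * sum3 F.
Proof.
rewrite /sum3 big_distrr; apply: eq_bigr => x _; rewrite big_distrr.
by apply: eq_bigr => y _; rewrite big_distrr.
Qed.

Lemma sum3_symmetrize F : sum3 (symmetrize F) = 6 * sum3 F.
Proof.
rewrite /symmetrize !sum3D.
have -> : sum3 (fun x y z => F x z y) = sum3 F.
  by apply: eq_bigr => x _; rewrite exchange_big.
have -> : sum3 (fun x y z => F y x z) = sum3 F by rewrite /sum3 exchange_big.
have -> : sum3 (fun x y z => F y z x) = sum3 F.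
  by rewrite /sum3 exchange_big; apply: eq_bigr => y _; rewrite exchange_big.
have -> : sum3 (fun x y z => F z x y) = sum3 F.
  by rewrite /sum3; under eq_bigr => x _ do rewrite exchange_big; rewrite exchange_big.
have -> : sum3 (fun x y z => F z y x) = sum3 F.
  rewrite /sum3; under eq_bigr => x _ do rewrite exchange_big.
  by rewrite exchange_big; apply: eq_bigr => z _; rewrite exchange_big.
lia.
Qed.

Lemma leq_sum3 F G : (forall x y z, F x y z <= G x y z) -> sum3 F <= sum3 G.
Proof.
move=> FG; apply: leq_sum => x _; apply: leq_sum => y _.
by apply: leq_sum => z _.
Qed.

Lemma leq_sum3_symmetrize F G :
  (forall x y z, symmetrize F x y z <= symmetrize G x y z) -> sum3 F <= sum3 G.
Proof. by move/leq_sum3; rewrite !sum3_symmetrize leq_pmul2l. Qed.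

Definition set3 (t : V * (V * V)) := [set t.1; t.2.1; t.2.2].

Lemma card_le_sum3 F (A : {set {set V}}) k :
  (forall S, S \in A -> exists2 s : seq (V * (V * V)), uniq s & size s = k /\
     {in s, forall t, 0 < F t.1 t.2.1 t.2.2 /\ set3 t = S}) ->
  k * #|A| <= sum3 F.
Proof.
move=> fibres.
have -> : sum3 F = \sum_(S : {set V}) \sum_(t | set3 t == S) F t.1 t.2.1 t.2.2.
  rewrite /sum3; under eq_bigr => x _ do rewrite pair_bigA /=.
  by rewrite pair_bigA (partition_big set3 predT).
rewrite (bigID (mem A)) /= -sum1_card big_distrr /= muln1.
apply: leq_trans (leq_addr _ _); apply: leq_sum => S SA.
have [s us [<- sS]] := fibres S SA.
rewrite -sum1_size big_uniq //=.
apply: (@leq_trans (\sum_(t in s) F t.1 t.2.1 t.2.2)).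
  by apply: leq_sum => t /sS [].
apply: (sub_le_big leqnn (fun m n => leq_addr n m)) => t /sS [_ ->].
by rewrite eqxx.
Qed.

End TripleSums.

Section PairCounting.
Variable V : finType.
Implicit Types q P : rel V.

Lemma sum_asym_le_npairs q P :
  (forall x y, q x y -> (x != y) && P x y) -> (forall x y, q x y -> ~~ q y x) ->
  \sum_x \sum_y (q x y : nat) <= npairs P.
Proof.
move=> qP q_asym; set Q := [set p : V * V | q p.1 p.2].
have -> : \sum_x \sum_y (q x y : nat) = #|Q|.
  rewrite pair_bigA -sum1dep_card [RHS]big_mkcond /=.
  by apply: eq_bigr => p _; case: (q _ _).
have f_inj : {in Q &, injective (fun p : V * V => [set p.1; p.2])}.
  move=> [a b] [a' b']; rewrite /Q !inE /= => qab qab' E.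
  have /andP [ab _] := qP _ _ qab.
  have [[-> ->] | [a'E b'E]] := set2_eq_cases ab E; first by [].
  by move: (q_asym _ _ qab); rewrite -a'E -b'E qab'.
rewrite -(card_in_imset f_inj); apply: subset_leq_card; apply/subsetP => E.
case/imsetP => -[a b]; rewrite /Q inE /= => qab ->; rewrite inE.
have /andP [ab Pab] := qP _ _ qab.
by apply/existsP; exists a; apply/existsP; exists b; rewrite ab eqxx Pab.
Qed.

Lemma sum_sym_le_npairs q P :
  (forall x y, q x y -> (x != y) && P x y) -> (forall x y, q x y = q y x) ->
  \sum_x \sum_y (q x y : nat) <= 2 * npairs P.
Proof.
move=> qP q_sym; pose q' x y := q x y && (enum_rank x < enum_rank y).
have -> : \sum_x \sum_y (q x y : nat) =
          \sum_x \sum_y (q' x y : nat) + \sum_x \sum_y (q' y x : nat).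
  rewrite -big_split; apply: eq_bigr => x _; rewrite -big_split.
  apply: eq_bigr => y _; rewrite /q' (q_sym y x).
  case qxy: (q x y) => //=; have /andP [xy _] := qP _ _ qxy.
  case: ltngtP => // /val_inj/enum_rank_inj xyE.
  by rewrite xyE eqxx in xy.
rewrite [X in _ + X]exchange_big addnn -mul2n leq_mul2l /=.
apply: sum_asym_le_npairs => [x y /andP [/qP] // | x y /andP [_ xy]].
by rewrite /q' negb_and -leqNgt ltnW ?orbT.
Qed.

End PairCounting.

Section OrientedGraph.
Variables (V : finType) (a : rel V).
Hypothesis a_asym : forall x y, a x y -> ~~ a y x.

Definition outdeg x := \sum_y (a x y : nat).
Definition indeg x := \sum_y (a y x : nat).
Definition nonadj x y := [&& x != y, ~~ a x y & ~~ a y x].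
Definition nonadj_deg x := \sum_y (nonadj x y : nat).

Definition outstar x y z := ([&& y != z, a x y & a x z] : nat).
Definition instar x y z := ([&& y != z, a y x & a z x] : nat).
Definition cyclic3 x y z := ([&& a x y, a y z & a z x] : nat).

Lemma a_irrefl x : a x x = false.
Proof. by apply/negP => axx; have := a_asym axx; rewrite axx. Qed.

Variant orient_spec (x y : V) : bool -> bool -> Type :=
  | ArcFwd : orient_spec x y true false
  | ArcBwd : orient_spec x y false true
  | NoArc : orient_spec x y false false.

Lemma orientP x y : orient_spec x y (a x y) (a y x).
Proof.
case axy: (a x y); first by rewrite (negbTE (a_asym axy)); constructor.
by case: (a y x); constructor.
Qed.

Lemma sum_indeg : \sum_x indeg x = \sum_x outdeg x.
Proof. exact: exchange_big. Qed.

Lemma deg_partition x : indeg x + outdeg x + nonadj_deg x = #|V|.-1.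
Proof.
rewrite -big_split -big_split -(cardC1 x) -sum1_card [RHS]big_mkcond /=.
apply: eq_bigr => y _; rewrite !inE /nonadj eq_sym.
by case: eqP => [->|_]; [rewrite a_irrefl | case: orientP].
Qed.

Lemma sum_outdeg_sq : \sum_x outdeg x ^ 2 = sum3 outstar + \sum_x outdeg x.
Proof. by rewrite -big_split; apply: eq_bigr => x _; rewrite sqr_sum_indicator. Qed.

Lemma sum_indeg_sq : \sum_x indeg x ^ 2 = sum3 instar + \sum_x indeg x.
Proof. by rewrite -big_split; apply: eq_bigr => x _; rewrite sqr_sum_indicator. Qed.

Lemma symmetrize_outstar_le x y z :
  symmetrize outstar x y z <=
  symmetrize (fun x y z => 2 * (a y x && a x z) + (a y x && nonadj x z)) x y z.
Proof.
rewrite /symmetrize /outstar /nonadj.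
case: (eqVneq x y) => [<-|xy]; first by rewrite !a_irrefl ?eqxx /= ?andbF.
case: (eqVneq x z) => [<-|xz]; first by rewrite !a_irrefl ?eqxx /= ?andbF.
case: (eqVneq y z) => [<-|yz]; first by rewrite !a_irrefl ?eqxx /= ?andbF.
by case: (orientP x y); case: (orientP x z); case: (orientP y z).
Qed.

Lemma symmetrize_cyclic3_le x y z :
  symmetrize (fun x y z => 4 * cyclic3 x y z + instar x y z + outstar x y z) x y z <=
  symmetrize (fun x y z => 4 * (a x y && a z x) + (a x y + a y x) * nonadj x z) x y z.
Proof.
rewrite /symmetrize /cyclic3 /instar /outstar /nonadj.
case: (eqVneq x y) => [<-|xy]; first by rewrite !a_irrefl ?eqxx /= ?andbF.
case: (eqVneq x z) => [<-|xz]; first by rewrite !a_irrefl ?eqxx /= ?andbF.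
case: (eqVneq y z) => [<-|yz]; first by rewrite !a_irrefl ?eqxx /= ?andbF.
by case: (orientP x y); case: (orientP x z); case: (orientP y z).
Qed.

Lemma sum_outdeg_sq_le :
  \sum_x outdeg x ^ 2 <=
  \sum_x (2 * (indeg x * outdeg x) + indeg x * nonadj_deg x + outdeg x).
Proof.
rewrite sum_outdeg_sq big_split /= leq_add2r.
apply: leq_trans (leq_sum3_symmetrize symmetrize_outstar_le) (eq_leq _).
apply: eq_bigr => x _.
rewrite /indeg /outdeg /nonadj_deg !big_distrlr big_distrr -big_split /=.
apply: eq_bigr => y _; rewrite big_distrr -big_split /=.
by apply: eq_bigr => z _; rewrite !mulnb.
Qed.

Lemma cyclic3_deg_sq_le :
  4 * sum3 cyclic3 + \sum_x indeg x ^ 2 + \sum_x outdeg x ^ 2 <=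
  \sum_x (4 * (outdeg x * indeg x) + (outdeg x + indeg x) * nonadj_deg x
          + indeg x + outdeg x).
Proof.
have rhsE : sum3 (fun x y z => 4 * (a x y && a z x) + (a x y + a y x) * nonadj x z) =
    \sum_x (4 * (outdeg x * indeg x) + (outdeg x + indeg x) * nonadj_deg x).
  apply: eq_bigr => x _.
  rewrite /indeg /outdeg /nonadj_deg -big_split !big_distrlr big_distrr -big_split /=.
  apply: eq_bigr => y _; rewrite big_distrr -big_split /=.
  by apply: eq_bigr => z _; rewrite !mulnb.
have := leq_sum3_symmetrize symmetrize_cyclic3_le.
rewrite rhsE sum3D (sum3D (fun x y z => 4 * cyclic3 x y z)) sum3_mul => local.
rewrite sum_outdeg_sq sum_indeg_sq 2!big_split /=; lia.
Qed.

Lemma sum_cyclic3_apex_deg x : \sum_y \sum_z cyclic3 x y z <= outdeg x * indeg x.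
Proof.
apply: leq_sum2_mul => y z; rewrite mulnb.
by apply: leq_nat_of_bool => /and3P [-> _ ->].
Qed.

Lemma sum_cyclic3_apex_arcs x : \sum_y \sum_z cyclic3 x y z <= \sum_y outdeg y.
Proof.
apply: leq_sum => y _; apply: leq_sum => z _.
by apply: leq_nat_of_bool => /and3P [_ -> _].
Qed.

End OrientedGraph.

Section Colouring.
Variables (V : finType) (c : V -> V -> Col).
Hypothesis c_valid : valid_colouring c.

Definition edge k x y := (x != y) && (c x y == k).
Local Notation red := (edge RedTo).

Lemma edge_rev k x y : edge k y x = edge (col_rev k) x y.
Proof.
rewrite /edge eq_sym; case: eqP => //= /eqP xy; rewrite (c_valid xy).
by case: k; case: (c x y).
Qed.

Lemma edge_asym k : col_rev k != k -> forall x y, edge k x y -> ~~ edge k y x.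
Proof.
move=> k_or x y /andP [xy /eqP cxy]; rewrite edge_rev /edge xy cxy /=.
by case: k k_or {cxy}.
Qed.

Lemma indeg_edge k x : indeg (edge k) x = outdeg (edge (col_rev k)) x.
Proof. by apply: eq_bigr => y _; rewrite edge_rev. Qed.

Lemma colour_partition x :
  outdeg (edge RedTo) x + outdeg (edge RedFrom) x + outdeg (edge Blue) x +
  outdeg (edge Green) x + outdeg (edge PurTo) x + outdeg (edge PurFrom) x = #|V|.-1.
Proof.
rewrite -!big_split -(cardC1 x) -sum1_card [RHS]big_mkcond /=.
apply: eq_bigr => y _; rewrite !inE /edge eq_sym.
by case: eqP => //= _; case: (c x y).
Qed.

Lemma sum_outdeg_oriented k : col_rev k != k ->
  \sum_x outdeg (edge k) x <= npairs (fun x y => c x y == k).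
Proof.
move=> k_or; apply: sum_asym_le_npairs => [x y /andP [-> ->] // |].
exact: edge_asym.
Qed.

Lemma sum_outdeg_unoriented k : col_rev k = k ->
  \sum_x outdeg (edge k) x <= 2 * npairs (fun x y => c x y == k).
Proof.
move=> k_un; apply: sum_sym_le_npairs => [x y /andP [-> ->] // | x y].
by rewrite [RHS]edge_rev k_un.
Qed.

Definition cherry x y z :=
  ([&& edge Blue y z, edge RedTo y x & edge RedTo z x] : nat).
Definition green3 x y z :=
  ([&& edge Green x y, edge Green y z & edge Green x z] : nat).

Lemma T_c_le_sum3 : 2 * T_c c <= sum3 cherry.
Proof.
apply: card_le_sum3 => S; rewrite inE => /existsP [x /existsP [y /existsP [z]]].
case/and4P => xy yz xz /and4P [/eqP -> byz ryx rzx].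
have [yx zy zx] : [/\ y != x, z != y & z != x] by rewrite !(eq_sym _ x) (eq_sym z).
exists [:: (x, (y, z)); (x, (z, y))].
  by rewrite /= inE !xpair_eqE eqxx /= (negbTE yz).
split=> // t; rewrite !inE => /orP [] /eqP ->; rewrite /cherry /edge /set3 /=.
  by rewrite yz yx zx byz ryx rzx.
by rewrite zy zx yx (c_valid yz) (eqP byz) rzx ryx setUAC.
Qed.

Lemma T_p_le_sum3 : 3 * T_p c <= sum3 (cyclic3 (edge PurTo)).
Proof.
apply: card_le_sum3 => S; rewrite inE => /existsP [x /existsP [y /existsP [z]]].
case/and4P => xy yz xz /and4P [/eqP -> pxy pyz pzx].
have zx : z != x by rewrite eq_sym.
exists [:: (x, (y, z)); (y, (z, x)); (z, (x, y))].
  by rewrite /= !inE !xpair_eqE (negbTE xy) (negbTE xz) /= ?andbF.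
split=> // t; rewrite !inE => /or3P [] /eqP ->;
  rewrite /cyclic3 /edge /set3 /= xy yz zx pxy pyz pzx; split=> //;
  by apply/setP => w; rewrite !inE; case: (w == x); case: (w == y); case: (w == z).
Qed.

Lemma T_g_le_sum3 : 6 * T_g c <= sum3 green3.
Proof.
apply: card_le_sum3 => S; rewrite inE => /andP [/eqP /cards3_triple [x [y [z]]]].
case=> xy yz xz -> /forall_inP green.
have green_pair u v :
    u \in [set x; y; z] -> v \in [set x; y; z] -> u != v -> edge Green u v.
  move=> uS vS uv; rewrite /edge uv.
  by move: (green u uS) => /forall_inP/(_ v vS)/implyP->.
have [yx zy zx] : [/\ y != x, z != y & z != x] by rewrite !(eq_sym _ x) (eq_sym z).
have [xS yS zS] : [/\ x \in [set x; y; z], y \in [set x; y; z] & z \in [set x; y; z]].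
  by rewrite !inE !eqxx ?orbT.
exists [:: (x, (y, z)); (x, (z, y)); (y, (x, z)); (y, (z, x)); (z, (x, y)); (z, (y, x))].
  rewrite /= !inE !xpair_eqE (negbTE xy) (negbTE yz) (negbTE xz).
  by rewrite (negbTE yx) (negbTE zy) (negbTE zx) /= ?andbF.
split=> // t; rewrite !inE => /or4P [| | | /or3P []] /eqP ->;
  rewrite /green3 /set3 /= !green_pair //; split=> //;
  by apply/setP => w; rewrite !inE; case: (w == x); case: (w == y); case: (w == z).
Qed.

Lemma sum_cherry_apex_sq x : \sum_y \sum_z cherry x y z <= indeg red x ^ 2.
Proof.
rewrite -mulnn; apply: leq_sum2_mul => y z; rewrite mulnb.
by apply: leq_nat_of_bool => /and3P [_ -> ->].
Qed.

Lemma sum_cherry_apex_blue x : \sum_y \sum_z cherry x y z <= 2 * n_blue c.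
Proof.
apply: leq_trans (sum_outdeg_unoriented (k := Blue) erefl).
apply: leq_sum => y _; apply: leq_sum => z _.
by apply: leq_nat_of_bool => /and3P [-> _ _].
Qed.

Lemma sum3_cherry_base :
  sum3 cherry <= \sum_y outdeg red y * outdeg (edge Blue) y.
Proof.
rewrite /sum3 exchange_big; apply: leq_sum => y _; apply: leq_sum2_mul => x z.
by rewrite mulnb; apply: leq_nat_of_bool => /and3P [-> -> _].
Qed.

Lemma sum_green3_apex_sq x : \sum_y \sum_z green3 x y z <= outdeg (edge Green) x ^ 2.
Proof.
rewrite -mulnn; apply: leq_sum2_mul => y z; rewrite mulnb.
by apply: leq_nat_of_bool => /and3P [-> _ ->].
Qed.

Lemma sum_green3_apex_green x : \sum_y \sum_z green3 x y z <= 2 * n_green c.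
Proof.
apply: leq_trans (sum_outdeg_unoriented (k := Green) erefl).
apply: leq_sum => y _; apply: leq_sum => z _.
by apply: leq_nat_of_bool => /and3P [_ -> _].
Qed.

Lemma blue_nonadj_red x y : edge Blue x y <= nonadj red x y.
Proof.
apply: leq_nat_of_bool => /andP [xy /eqP cxy].
by rewrite /nonadj [red y x]edge_rev /edge xy cxy.
Qed.

End Colouring.

Section PolynomialInequalities.
Variable R : realFieldType.
Local Open Scope ring_scope.

(* At a vertex: red in- and out-degree i, o, blue degree b, number r of
   non-red pairs, and s = n - 1. *)
Lemma red_vertex_ineq (i o b r s : R) :
  0 <= i -> 0 <= o -> 0 <= b -> i + o + r <= s -> b <= r ->
  200 * (o * b) + 31 * (2 * (i * o) + i * r + o) + 31 * (s * i) <=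
  31 * (s * s + s) + 31 * (o * o) + 31 * (s * o).
Proof.
move=> i0 o0 b0 deg_s br; set u := s - i - o.
have ob : 0 <= o * u - o * b by rewrite -mulrBr mulr_ge0 // /u; lra.
have ir : 0 <= i * u - i * r by rewrite -mulrBr mulr_ge0 // /u; lra.
have sq : 0 <= ((186 * o - 107 * u) ^+ 2 + 83 * u ^+ 2) / 372.
  by rewrite divr_ge0 // addr_ge0 ?sqr_ge0 // mulr_ge0 // sqr_ge0.
rewrite -subr_ge0.
have -> : 31 * (s * s + s) + 31 * (o * o) + 31 * (s * o) -
    (200 * (o * b) + 31 * (2 * (i * o) + i * r + o) + 31 * (s * i)) =
    31 * (s - o) + ((186 * o - 107 * u) ^+ 2 + 83 * u ^+ 2) / 372
    + 200 * (o * u - o * b) + 31 * (i * u - i * r).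
  by rewrite /u; field.
rewrite /u in ob ir sq *; lra.
Qed.

(* At a vertex: red out/in-degree, blue and green degree, purple out/in-degree,
   number np of non-purple pairs, and s = n - 1. *)
Lemma colour_vertex_ineq (ro ri bl gr po pi np s : R) :
  0 <= ro -> 0 <= ri -> 0 <= bl -> 0 <= gr -> 0 <= po -> 0 <= pi ->
  ro + ri + bl + gr + po + pi <= s -> pi + po + np <= s ->
  2 * (4 * (po * pi) + (po + pi) * np + pi + po) + gr * gr + 3 * (ro * bl) <=
  (s + 1) * (s + 1) + 2 * (pi * pi) + 2 * (po * po).
Proof.
move=> ro0 ri0 bl0 gr0 po0 pi0 deg_s pdeg_s.
set p := pi + po; set x := ro + bl + gr.
have purple_slack : 0 <= 2 * p * (s - p - np) by rewrite mulr_ge0 ?mulr_ge0 // /p; lra.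
have degree_slack : 0 <= (s - p - x) * (s - p + x) by rewrite mulr_ge0 // /p /x; lra.
have red_blue_green : 0 <= (ro - bl) ^+ 2 + ro * bl + 2 * gr * (ro + bl).
  by rewrite !addr_ge0 ?sqr_ge0 // ?mulr_ge0 // addr_ge0.
have purple_balance : 0 <= 3 * (pi - po) ^+ 2 by rewrite mulr_ge0 // sqr_ge0.
rewrite -subr_ge0.
have -> : (s + 1) * (s + 1) + 2 * (pi * pi) + 2 * (po * po) -
    (2 * (4 * (po * pi) + (po + pi) * np + pi + po) + gr * gr + 3 * (ro * bl)) =
    (2 * (s - p) + 1) + 3 * (pi - po) ^+ 2 + 2 * p * (s - p - np) +
    (s - p - x) * (s - p + x) + ((ro - bl) ^+ 2 + ro * bl + 2 * gr * (ro + bl)).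
  by rewrite /p /x; ring.
rewrite /p /x in purple_slack degree_slack red_blue_green purple_balance *; lra.
Qed.

Lemma mul_le_weighted_sqr (o b s l : R) :
  0 <= o -> 0 <= b -> o + b <= s -> o * b <= s * (l ^+ 2 * o + (1 - l) ^+ 2 * b).
Proof.
move=> o0 b0 obs; set w := l ^+ 2 * o + (1 - l) ^+ 2 * b.
have w0 : 0 <= w by rewrite addr_ge0 // mulr_ge0 // sqr_ge0.
apply: le_trans (ler_wpM2r w0 obs); rewrite -subr_ge0.
suff -> : (o + b) * w - o * b = (l * o - (1 - l) * b) ^+ 2 by apply: sqr_ge0.
by rewrite /w; ring.
Qed.

End PolynomialInequalities.

Section CubeBounds.
Variables (V : finType) (c : V -> V -> Col).
Hypothesis c_valid : valid_colouring c.

Local Notation red := (edge c RedTo).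
Local Notation purple := (edge c PurTo).

Lemma T_c_le_cube : 400 * T_c c <= 31 * #|V| ^ 3.
Proof.
have red_asym := edge_asym c_valid (k := RedTo) isT.
have vertex x :
    200 * (outdeg red x * outdeg (edge c Blue) x)
    + 31 * (2 * (indeg red x * outdeg red x) + indeg red x * nonadj_deg red x
            + outdeg red x)
    + 31 * (#|V|.-1 * indeg red x)
  <= 31 * (#|V|.-1 * #|V|.-1 + #|V|.-1) + 31 * (outdeg red x ^ 2)
     + 31 * (#|V|.-1 * outdeg red x).
  have : outdeg (edge c Blue) x <= nonadj_deg red x.
    by apply: leq_sum => y _; exact: (blue_nonadj_red c_valid x y).
  move: (deg_partition red_asym x) => /eq_leq.
  move: (indeg red x) (outdeg red x) (outdeg (edge c Blue) x) (nonadj_deg red x) #|V|.-1.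
  move=> i o b r s; rewrite -mulnn -!(ler_nat rat) !(natrM, natrD).
  by apply: red_vertex_ineq; apply: ler0n.
have := leq_sum (index_enum V) (fun x (_ : true) => vertex x).
rewrite [in X in X <= _]big_split [in X in X <= _]big_split /=.
rewrite [in X in _ <= X]big_split [in X in _ <= X]big_split /= -!big_distrr /=.
rewrite sum_nat_const -[#|_|]/#|V| (sum_indeg red) => summed.
have := sum_outdeg_sq_le red_asym.
have cherries := leq_trans (T_c_le_sum3 c_valid) (sum3_cherry_base c).
have cube : #|V| * (#|V|.-1 * #|V|.-1 + #|V|.-1) <= #|V| ^ 3.
  by case: #|V| => //= n; nia.
lia.
Qed.

Lemma mixed_triangles_le_cube : 24 * T_p c + 6 * T_g c + 6 * T_c c <= #|V| ^ 3.
Proof.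
have purple_asym := edge_asym c_valid (k := PurTo) isT.
have vertex x :
    2 * (4 * (outdeg purple x * indeg purple x)
         + (outdeg purple x + indeg purple x) * nonadj_deg purple x
         + indeg purple x + outdeg purple x)
    + outdeg (edge c Green) x ^ 2 + 3 * (outdeg red x * outdeg (edge c Blue) x)
  <= (#|V|.-1 + 1) * (#|V|.-1 + 1) + 2 * indeg purple x ^ 2 + 2 * outdeg purple x ^ 2.
  move: (colour_partition c x) (deg_partition purple_asym x) => /eq_leq + /eq_leq.
  rewrite (indeg_edge c_valid).
  move: (outdeg red x) (outdeg (edge c RedFrom) x) (outdeg (edge c Blue) x).
  move: (outdeg (edge c Green) x) (outdeg purple x) (outdeg (edge c PurFrom) x).
  move: (nonadj_deg purple x) #|V|.-1 => np s gr po pi ro ri bl.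
  rewrite -!mulnn -!(ler_nat rat) !(natrM, natrD).
  by apply: colour_vertex_ineq; apply: ler0n.
have := leq_sum (index_enum V) (fun x (_ : true) => vertex x).
rewrite [in X in X <= _]big_split [in X in X <= _]big_split /=.
rewrite [in X in _ <= X]big_split [in X in _ <= X]big_split /= -!big_distrr /=.
rewrite sum_nat_const -[#|_|]/#|V| => summed.
have := cyclic3_deg_sq_le purple_asym.
have := leq_trans (T_c_le_sum3 c_valid) (sum3_cherry_base c).
have := T_p_le_sum3 c.
have : 6 * T_g c <= \sum_x outdeg (edge c Green) x ^ 2.
  apply: leq_trans (T_g_le_sum3 c) _.
  by apply: leq_sum => x _; apply: sum_green3_apex_sq.
have cube : (#|V|.-1 + 1) * (#|V| * (#|V|.-1 + 1)) <= #|V| ^ 3.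
  by case: #|V| => //= n; nia.
lia.
Qed.

End CubeBounds.

Local Open Scope ring_scope.

Section SqrtInequalities.
Variable R : rcfType.

Lemma min_le_mul_sqrt (t d M : R) :
  0 <= d -> 0 <= M -> t <= d ^+ 2 -> t <= M -> t <= d * Num.sqrt M.
Proof.
move=> d0 M0 td tM; case: (lerP (d ^+ 2) M) => [d2M | Md2].
  apply: le_trans td _; rewrite expr2 ler_wpM2l //.
  by rewrite -(ger0_norm d0) -sqrtr_sqr ler_sqrt.
apply: le_trans tM _; rewrite -{1}(sqr_sqrtr M0) expr2 ler_wpM2r ?sqrtr_ge0 //.
by rewrite -(ger0_norm d0) -sqrtr_sqr ler_sqrt ?sqr_ge0 // ltW.
Qed.

Lemma sum_min_le_mul_sqrt (I : finType) (t d : I -> R) (M : R) :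
  0 <= M -> (forall x, 0 <= d x) -> (forall x, t x <= d x ^+ 2) ->
  (forall x, t x <= M) -> \sum_x t x <= Num.sqrt M * \sum_x d x.
Proof.
move=> M0 d0 td tM; rewrite mulr_sumr; apply: ler_sum => x _.
by rewrite mulrC min_le_mul_sqrt.
Qed.

Lemma sqrt_le_mul (g M n : R) :
  0 <= g -> 0 <= n -> M <= g * n ^+ 2 -> Num.sqrt M <= Num.sqrt g * n.
Proof.
move=> g0 n0 Mg; rewrite -(ger0_norm n0) -sqrtr_sqr -sqrtrM //.
by rewrite ler_sqrt // mulr_ge0 ?sqr_ge0.
Qed.

Lemma mul_sqrt_le_cube (g M n : R) :
  0 <= g -> 0 <= n -> 0 <= M -> M <= g * n ^+ 2 ->
  Num.sqrt M * M <= g * Num.sqrt g * n ^+ 3.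
Proof.
move=> g0 n0 M0 Mg; have sM := sqrt_le_mul g0 n0 Mg.
apply: le_trans (ler_pM (sqrtr_ge0 _) M0 sM Mg) _.
by rewrite le_eqVlt; apply/orP; left; apply/eqP; ring.
Qed.

End SqrtInequalities.

Section EdgeCountBounds.
Variables (R : rcfType) (V : finType) (c : V -> V -> Col).
Hypothesis c_valid : valid_colouring c.

Local Notation red := (edge c RedTo).
Local Notation purple := (edge c PurTo).

Lemma T_g_le_sqrt :
  6 * (T_g c)%:R <= Num.sqrt (2 * n_green c)%:R * (2 * n_green c)%:R :> R.
Proof.
have -> : 6 * (T_g c)%:R = (6 * T_g c)%:R :> R by rewrite natrM.
apply: (@le_trans _ _ (\sum_x (\sum_y \sum_z green3 c x y z)%:R)).
  by rewrite -natr_sum ler_nat T_g_le_sum3.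
apply: le_trans
  (_ : _ <= Num.sqrt (2 * n_green c)%:R * \sum_x (outdeg (edge c Green) x)%:R) _.
  apply: sum_min_le_mul_sqrt => [|x|x|x]; rewrite ?ler0n //.
    by rewrite -natrX ler_nat sum_green3_apex_sq.
  by rewrite ler_nat sum_green3_apex_green.
rewrite ler_wpM2l ?sqrtr_ge0 // -natr_sum ler_nat.
exact: sum_outdeg_unoriented.
Qed.

Lemma T_p_le_sqrt : 3 * (T_p c)%:R <= Num.sqrt (n_purple c)%:R * (n_purple c)%:R :> R.
Proof.
have purple_asym := edge_asym c_valid (k := PurTo) isT.
have -> : 3 * (T_p c)%:R = (3 * T_p c)%:R :> R by rewrite natrM.
apply: (@le_trans _ _ (\sum_x (\sum_y \sum_z cyclic3 purple x y z)%:R)).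
  by rewrite -natr_sum ler_nat T_p_le_sum3.
pose d x : R := ((outdeg purple x)%:R + (indeg purple x)%:R) / 2.
apply: le_trans (_ : _ <= Num.sqrt (n_purple c)%:R * \sum_x d x) _.
  apply: sum_min_le_mul_sqrt => [|x|x|x]; rewrite ?ler0n //.
  - by rewrite divr_ge0 ?addr_ge0 ?ler0n.
  - apply: le_trans (_ : (outdeg purple x)%:R * (indeg purple x)%:R <= _).
      by rewrite -natrM ler_nat sum_cyclic3_apex_deg.
    rewrite -subr_ge0; set a := (outdeg purple x)%:R; set b := (indeg purple x)%:R.
    suff -> : d x ^+ 2 - a * b = ((a - b) / 2) ^+ 2 by apply: sqr_ge0.
    by rewrite /d; field.
  - rewrite ler_nat; apply: leq_trans (sum_cyclic3_apex_arcs _ x) _.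
    exact: sum_outdeg_oriented.
have -> : \sum_x d x = (\sum_x outdeg purple x)%:R.
  by rewrite -mulr_suml big_split /= -!natr_sum sum_indeg; field.
rewrite ler_wpM2l ?sqrtr_ge0 // ler_nat.
exact: sum_outdeg_oriented.
Qed.

Lemma T_c_le_sqrt :
  2 * (T_c c)%:R <= Num.sqrt (2 * n_blue c)%:R * (n_red c)%:R :> R.
Proof.
have -> : 2 * (T_c c)%:R = (2 * T_c c)%:R :> R by rewrite natrM.
apply: (@le_trans _ _ (\sum_x (\sum_y \sum_z cherry c x y z)%:R)).
  by rewrite -natr_sum ler_nat T_c_le_sum3.
apply: le_trans (_ : _ <= Num.sqrt (2 * n_blue c)%:R * \sum_x (indeg red x)%:R) _.
  apply: sum_min_le_mul_sqrt => [|x|x|x]; rewrite ?ler0n //.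
    by rewrite -natrX ler_nat sum_cherry_apex_sq.
  by rewrite ler_nat sum_cherry_apex_blue.
rewrite ler_wpM2l ?sqrtr_ge0 // -natr_sum ler_nat sum_indeg.
exact: sum_outdeg_oriented.
Qed.

Lemma T_c_le_weighted (l : R) :
  2 * (T_c c)%:R <=
  #|V|.-1%:R * (l ^+ 2 * (n_red c)%:R + (1 - l) ^+ 2 * (2 * n_blue c)%:R).
Proof.
have -> : 2 * (T_c c)%:R = (2 * T_c c)%:R :> R by rewrite natrM.
apply: (@le_trans _ _ (\sum_x (outdeg red x)%:R * (outdeg (edge c Blue) x)%:R)).
  under eq_bigr do rewrite -natrM.
  by rewrite -natr_sum ler_nat (leq_trans (T_c_le_sum3 c_valid) (sum3_cherry_base c)).
apply: le_trans (_ : _ <= \sum_x #|V|.-1%:R *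
    (l ^+ 2 * (outdeg red x)%:R + (1 - l) ^+ 2 * (outdeg (edge c Blue) x)%:R)) _.
  apply: ler_sum => x _; apply: mul_le_weighted_sqr; rewrite ?ler0n // -natrD ler_nat.
  by have := colour_partition c x; lia.
rewrite -mulr_sumr big_split /= -!mulr_sumr -!natr_sum.
rewrite ler_wpM2l ?ler0n // lerD // ler_wpM2l ?sqr_ge0 // ler_nat.
  exact: sum_outdeg_oriented.
exact: sum_outdeg_unoriented.
Qed.

End EdgeCountBounds.

Lemma pair_density (R : realFieldType) (k n : nat) (x : R) :
  (1 < n)%N -> k%:R = x * 'C(n, 2)%:R -> 0 <= x /\ (2 * k)%:R <= x * n%:R ^+ 2.
Proof.
move=> n_gt1 kE; have C_gt0 : 0 < 'C(n, 2)%:R :> R by rewrite ltr0n bin_gt0.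
have x0 : 0 <= x by rewrite -(pmulr_lge0 _ C_gt0) -kE ler0n.
have C2 : ('C(n, 2) * 2 = n * n.-1)%N.
  case: n {n_gt1 kE C_gt0} => // n; rewrite bin2 -[RHS]odd_double_half -muln2 oddM /=.
  by case: (odd n).
split=> //; rewrite natrM kE mulrCA -natrM mulnC C2 natrM expr2.
by rewrite ler_wpM2l // ler_wpM2l ?ler0n // ler_nat leq_pred.
Qed.

Section DensityBounds.
Variables (R : rcfType) (V : finType) (c : V -> V -> Col).
Hypothesis c_valid : valid_colouring c.
Local Notation n := (#|V|%:R : R).

Lemma T_g_bound (gamma : R) :
  0 <= gamma -> (2 * n_green c)%:R <= gamma * n ^+ 2 ->
  (T_g c)%:R <= gamma * Num.sqrt gamma * (n ^+ 3 / 6).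
Proof.
move=> g0 green_le.
have := mul_sqrt_le_cube g0 (ler0n _ _) (ler0n _ _) green_le.
have := T_g_le_sqrt R c_valid; lra.
Qed.

Lemma T_p_bound (delta : R) :
  0 <= 2 * delta -> (2 * n_purple c)%:R <= 2 * delta * n ^+ 2 ->
  (T_p c)%:R <= 2 * (delta * Num.sqrt delta) * (n ^+ 3 / 6).
Proof.
move=> d0 purple_le; have d0' : 0 <= delta by lra.
have : (n_purple c)%:R <= delta * n ^+ 2 by move: purple_le; rewrite natrM; lra.
move/(mul_sqrt_le_cube d0' (ler0n _ _) (ler0n _ _)).
have := T_p_le_sqrt R c_valid; lra.
Qed.

Lemma T_c_bound_sqrt (alpha beta : R) :
  0 <= 2 * alpha -> (2 * n_red c)%:R <= 2 * alpha * n ^+ 2 ->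
  0 <= beta -> (2 * n_blue c)%:R <= beta * n ^+ 2 ->
  (T_c c)%:R <= 3 * alpha * Num.sqrt beta * (n ^+ 3 / 6).
Proof.
move=> a0 red_le b0 blue_le.
have red_le' : (n_red c)%:R <= alpha * n ^+ 2 by move: red_le; rewrite natrM; lra.
have := ler_pM (sqrtr_ge0 _) (ler0n _ _) (sqrt_le_mul b0 (ler0n _ _) blue_le) red_le'.
have := T_c_le_sqrt R c_valid; lra.
Qed.

Lemma T_c_bound_const : (T_c c)%:R <= 465%:R / 1000%:R * (n ^+ 3 / 6).
Proof.
have := T_c_le_cube c_valid; rewrite -(ler_nat R) !(natrX, natrM); lra.
Qed.

Lemma mixed_bound :
  (T_p c)%:R + 4^-1 * ((T_g c)%:R + (T_c c)%:R) <= 4^-1 * (n ^+ 3 / 6).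
Proof.
have := mixed_triangles_le_cube c_valid.
rewrite -(ler_nat R) !(natrX, natrM, natrD); lra.
Qed.

Lemma T_c_bound_weighted (alpha beta : R) :
  0 <= 2 * alpha -> (2 * n_red c)%:R <= 2 * alpha * n ^+ 2 ->
  0 <= beta -> (2 * n_blue c)%:R <= beta * n ^+ 2 ->
  (T_c c)%:R <= 3 * (alpha * beta / (alpha + beta)) * (n ^+ 3 / 6).
Proof.
move=> a0 red_le b0 blue_le; set h := alpha * beta / (alpha + beta).
set l := beta / (alpha + beta).
have weights : l ^+ 2 * alpha + (1 - l) ^+ 2 * beta = h.
  (* If alpha + beta = 0 then alpha = beta = 0, and l = h = 0 since x / 0 = 0. *)
  have [ab0 | ab0] := eqVneq (alpha + beta) 0; last by rewrite /l /h; field.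
  have [a_0 b_0] : alpha = 0 /\ beta = 0 by split; lra.
  by rewrite /l /h a_0 b_0 !(mul0r, mulr0, addr0).
have red_le' : (n_red c)%:R <= alpha * n ^+ 2 by move: red_le; rewrite natrM; lra.
have edges : l ^+ 2 * (n_red c)%:R + (1 - l) ^+ 2 * (2 * n_blue c)%:R <= h * n ^+ 2.
  have := ler_wpM2l (sqr_ge0 l) red_le'; have := ler_wpM2l (sqr_ge0 (1 - l)) blue_le.
  rewrite -weights; lra.
have s_le : #|V|.-1%:R <= n by rewrite ler_nat leq_pred.
have := ler_pM (ler0n _ _) (addr_ge0 (mulr_ge0 (sqr_ge0 _) (ler0n _ _))
  (mulr_ge0 (sqr_ge0 _) (ler0n _ _))) s_le edges.
have := T_c_le_weighted c_valid l; lra.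
Qed.

End DensityBounds.

Theorem lemma5p1 (R : rcfType) (V : finType) (c : V -> V -> Col)
  (alpha beta gamma delta : R) :
  valid_colouring c ->
  (1 < #|V|)%N ->
  (n_red c)%:R = 2 * alpha * 'C(#|V|, 2)%:R ->
  (n_blue c)%:R = beta * 'C(#|V|, 2)%:R ->
  (n_green c)%:R = gamma * 'C(#|V|, 2)%:R ->
  (n_purple c)%:R = 2 * delta * 'C(#|V|, 2)%:R ->
  let N := (#|V|%:R : R) ^+ 3 / 6 in
  (T_g c)%:R <= gamma * Num.sqrt gamma * N /\
      (T_p c)%:R <= 2 * (delta * Num.sqrt delta) * N /\
      (T_c c)%:R <= 3 * alpha * Num.sqrt beta * N /\
      (T_c c)%:R <= (465%:R / 1000%:R) * N /\
      (T_p c)%:R + 4^-1 * ((T_g c)%:R + (T_c c)%:R) <= 4^-1 * N /\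
      (T_c c)%:R <= 3 * (alpha * beta / (alpha + beta)) * N.
Proof.
move=> c_valid n_gt1 red_dens blue_dens green_dens purple_dens N.
have [a0 red_le] := pair_density n_gt1 red_dens.
have [b0 blue_le] := pair_density n_gt1 blue_dens.
have [g0 green_le] := pair_density n_gt1 green_dens.
have [d0 purple_le] := pair_density n_gt1 purple_dens.
split; first exact: T_g_bound.
split; first exact: T_p_bound.
split; first exact: T_c_bound_sqrt.
split; first exact: T_c_bound_const.
split; first exact: mixed_bound.
exact: T_c_bound_weighted.
Qed.
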